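(* Under the standing assumptions (H), for every fixed $\delta>0$, with $z(x)=\frac1a(\sqrt{2ax}+\delta\sqrt x)$, \[ \mathbf{P}\Big(A_\tau>x,\ \overline X_\tau\in\Big[y(x),\sqrt{2ax}-\tfrac{h(x)}{\log x}\Big],\ J_{\ge2},\ \tau\le z(x)\Big)=o\big(\overline F(\sqrt{2ax})\big),\qquad x\to\infty. \]
   Context: Standing assumptions (H): $X_1,X_2,\dots$ i.i.d. with $\mathbf{E}X_1=-a<0$, $\mathrm{Var}(X_1)<\infty$, $\overline F(x)=\mathbf{P}(X_1>x)\sim e^{-g(x)}x^{-2}$ as $x\to\infty$, where $g:(0,\infty)\to\mathbb{R}$ is continuously differentiable, nondecreasing for all large $x$, $x\mapsto g(x)/x^{\gamma_0}$ is nonincreasing on $(0,\infty)$ with limit $0$ for some $\gamma_0\in(0,1/2)$, and $xg'(x)\to\infty$. Notation: $S_0=0$, $S_n=X_1+\dots+X_n$, $\tau=\min\{n\ge1:S_n\le0\}$, $A_\tau=\sum_{k=0}^{\tau-1}S_k$, $\overline X_\tau=\max(X_1,\dots,X_\tau)$, $h(x)=\sqrt{2ax}/g(\sqrt{2ax})$, $y(x)=\sqrt{2ax}-C_0h(x)\log x$ for a fixed constant $C_0>\frac{5/4}{1-\gamma_0}$. $J_{\ge2}$ is the event that there exist two distinct indices $k,l\in\{1,\dots,\tau\}$ with $X_k>y(x)$ and $X_l>y(x)$. *)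

From HB Require Import structures.
From mathcomp Require Import all_boot all_order all_algebra.
From mathcomp Require Import all_classical all_reals all_analysis.
Set Implicit Arguments. Unset Strict Implicit. Unset Printing Implicit Defensive.
Import Order.TTheory GRing.Theory Num.Theory.
Import numFieldNormedType.Exports.
Local Open Scope classical_set_scope.
Local Open Scope ring_scope.

Section RW.
Context {d : measure_display} {T : measurableType d} {R : realType}
  (P : probability T R).

Definition mutually_independent (X : nat -> {RV P >-> R}) : Prop :=
  forall (I : seq nat) (B : nat -> set R),
    uniq I -> (forall i, measurable (B i)) ->
    P (\bigcap_(i in [set` I]) (X i @^-1` B i)) =
    (\prod_(i <- I) P (X i @^-1` B i))%E.

Definition identically_distributed (X : nat -> {RV P >-> R}) : Prop :=
  forall n (B : set R), measurable B -> P (X n @^-1` B) = P (X 0%N @^-1` B).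

(* Indexing shift: X k here is X_{k+1} of the paper. *)
Definition Ssum (X : nat -> {RV P >-> R}) (n : nat) (t : T) : R :=
  \sum_(k < n) X k t.

Definition Asum (X : nat -> {RV P >-> R}) (n : nat) (t : T) : R :=
  \sum_(k < n) Ssum X k t.

(* max(X_1, ..., X_n) (meaningful for n >= 1) *)
Definition Xmax (X : nat -> {RV P >-> R}) (n : nat) (t : T) : R :=
  \big[Num.max/X 0%N t]_(k < n) X k t.

Definition is_tau (X : nat -> {RV P >-> R}) (t : T) (n : nat) : Prop :=
  [/\ (1 <= n)%N, Ssum X n t <= 0 &
      forall m, (1 <= m)%N -> (m < n)%N -> 0 < Ssum X m t].

Definition Fbar (X : nat -> {RV P >-> R}) (x : R) : R :=
  fine (P [set t | x < X 0%N t]).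

End RW.

Definition hfun {R : realType} (a : R) (g : R -> R) (x : R) : R :=
  Num.sqrt (2 * a * x) / g (Num.sqrt (2 * a * x)).

Definition yfun {R : realType} (a C0 : R) (g : R -> R) (x : R) : R :=
  Num.sqrt (2 * a * x) - C0 * hfun a g x * ln x.

Definition zfun {R : realType} (a delta : R) (x : R) : R :=
  (Num.sqrt (2 * a * x) + delta * Num.sqrt x) / a.

Definition event_main {d : measure_display} {T : measurableType d}
  {R : realType} (P : probability T R) (X : nat -> {RV P >-> R})
  (a C0 delta : R) (g : R -> R) (x : R) : set T :=
  [set t | exists n : nat,
     [/\ is_tau X t n,
         x < Asum X n t,
         yfun a C0 g x <= Xmax X n t /\
           Xmax X n t <= Num.sqrt (2 * a * x) - hfun a g x / ln x,
         (exists k l : nat, [/\ k != l, (k < n)%N, (l < n)%N,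
             yfun a C0 g x < X k t & yfun a C0 g x < X l t]) &
         n%:R <= zfun a delta x]].

From HB Require Import structures.
From mathcomp Require Import all_boot all_order all_algebra.
From mathcomp Require Import all_classical all_reals all_analysis.
From mathcomp Require Import lra ring measurable_realfun.
(** On the event, two of the first [tau <= z(x)] increments exceed [y(x)], so
   a union bound over pairs of indices and independence give
   [P <= z(x)^2 Fbar(y(x))^2].  Monotonicity of [g(u)/u^gamma0] gives
   [g(y) >= g(s) - C0 log x] for [s = sqrt(2ax)], and [x g'(x) -> oo] makes
   [g] eventually dominate any multiple of [log], so [2 g(y) - g(s) -> oo].
   Since [Fbar(t)] is within a factor 2 of [e^{-g(t)} t^{-2}] and
   [y >= s/2], writing [z(x) = c s] this yields
   [z^2 Fbar(y)^2 <= 128 c^2 e^{g(s) - 2 g(y)} Fbar(s) = o(Fbar(s))]. *)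

Set Implicit Arguments. Unset Strict Implicit. Unset Printing Implicit Defensive.
Import Order.TTheory GRing.Theory Num.Theory.
Import numFieldNormedType.Exports.
Local Open Scope classical_set_scope.
Local Open Scope ring_scope.

Section real_asymptotics.
Variable R : realType.
Implicit Types (f g : R -> R) (K : R).

Lemma cvg_ratio1_near_bounds f g :
  (f x / g x) @[x --> +oo] --> (1 : R) -> (\forall x \near +oo, 0 < g x) ->
  \forall x \near +oo, g x / 2 <= f x <= 2 * g x.
Proof.
move=> fg1 g0; have : \forall x \near +oo, `|1 - f x / g x| < 1 / 2.
  by move/cvgrPdist_lt : fg1; apply; lra.
apply: filterS2 g0 => x gx0; rewrite ltr_norml => /andP[lo hi].
rewrite -[f x](mulfVK (lt0r_neq0 gx0)); set q := f x / g x in lo hi *.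
by apply/andP; split; nra.
Qed.

Lemma near_le_mulr_ln K c : 0 < K -> \forall t \near +oo, c <= K * ln t.
Proof.
move=> K0; exists (expR (c / K)); split; first exact: num_real.
move=> t ct; have t0 : 0 < t := lt_trans (expR_gt0 _) ct.
by rewrite mulrC -ler_pdivrMr // -(expRK (c / K)) ler_ln ?posrE ?expR_gt0 // ltW.
Qed.

Lemma ln_le_near_of_mulr_derive1_cvgy g K : 0 < K ->
  (forall x, 0 < x -> derivable g x 1) ->
  (x * derive1 g x) @[x --> +oo] --> +oo ->
  \forall t \near +oo, K * ln t <= g t.
Proof.
move=> K0 dg /cvgryPge/(_ (2 * K)) [M [_ xg'M]].
pose t0 := Num.max M 1 + 1.
have t0M : M < t0 by rewrite /t0 ltr_pwDr // le_max lexx.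
have t00 : 0 < t0 by rewrite /t0 (lt_le_trans ltr01) // lerDr (le_trans ler01) // le_max lexx orbT.
pose phi t := g t - 2 * K * ln t.
have dphi u : 0 < u -> derivable phi u 1 /\ derive1 phi u = derive1 g u - 2 * K / u.
  move=> u0; have dln : derivable (@ln R) u 1 by apply: ex_derive; exact: is_derive1_ln.
  have dKln : derivable (fun u => 2 * K * ln u) u 1 by exact: derivableZ.
  split; first exact: derivableB (dg _ u0) dKln.
  rewrite derive1E /phi deriveB //; last exact: dg.
  have ? := is_derive1_ln u0.
  by rewrite deriveZ // -!derive1E (derive1E (@ln R)) derive_val.
have phi_ndecr t : t0 <= t -> phi t0 <= phi t.
  apply: ger0_derive1_ndecry => // [u|u|].
  - by rewrite in_itv /= andbT => /(lt_trans t00)/dphi[].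
  - rewrite in_itv /= andbT => t0u; have u0 := lt_trans t00 t0u.
    rewrite (dphi _ u0).2 subr_ge0 ler_pdivrMr // [_ * u]mulrC.
    exact: xg'M (lt_trans t0M t0u).
  - apply: derivable_within_continuous => u; rewrite in_itv /= andbT.
    by move=> /(lt_le_trans t00)/dphi[].
near=> t.
have : phi t0 <= phi t.
  by apply: phi_ndecr; near: t; exact: nbhs_pinfty_ge (num_real _).
suff : - phi t0 <= K * ln t by rewrite /phi; lra.
by near: t; exact: near_le_mulr_ln.
Unshelve. all: end_near. Qed.

Lemma mul_ratio_le_of_nonincr_powR g (gam y s : R) :
  (forall u v, 0 < u -> u <= v -> g v / v `^ gam <= g u / u `^ gam) ->
  gam <= 1 -> 0 < y -> y <= s -> 0 <= g s -> g s * (y / s) <= g y.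
Proof.
move=> gmono gam1 y0 ys gs0; have s0 := lt_le_trans y0 ys.
have ratio : y / s <= y `^ gam / s `^ gam.
  rewrite -[y in y `^ _](divfK (lt0r_neq0 s0)) powRM; last 2 first.
  - by rewrite divr_ge0 // ltW.
  - exact: ltW.
  rewrite mulfK ?gt_eqF ?powR_gt0 //; apply: ger1_powR => //.
  by rewrite divr_gt0 //= ler_pdivrMr // mul1r.
apply: le_trans (ler_wpM2l gs0 ratio) _.
rewrite mulrCA; apply: le_trans (ler_wpM2l (powR_ge0 y gam) (gmono _ _ y0 ys)) _.
by rewrite mulrC divfK // gt_eqF // powR_gt0.
Qed.

Lemma sqrtr_mul_cvgy (c : R) : 0 < c -> Num.sqrt (c * x) @[x --> +oo] --> +oo.
Proof.
move=> c0; apply/cvgryPge => A; near=> x.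
apply: (le_trans (ler_norm A)); rewrite -sqrtr_sqr ler_wsqrtr //.
by rewrite -ler_pdivrMl //; near: x; exact: nbhs_pinfty_ge (num_real _).
Unshelve. all: end_near. Qed.

Lemma near_sqrtr_mul (c : R) (Q : R -> Prop) : 0 < c ->
  (\forall t \near +oo, Q t) -> \forall x \near +oo, Q (Num.sqrt (c * x)).
Proof. by move=> c0 /(sqrtr_mul_cvgy c0). Qed.

Lemma ln_sqrtr_mul (c x : R) : 0 < c -> 0 < x ->
  ln x = 2 * ln (Num.sqrt (c * x)) - ln c.
Proof.
move=> c0 x0; have cx0 : 0 < c * x by exact: mulr_gt0.
rewrite mulr_natl -lnXn ?sqrtr_gt0 // (sqr_sqrtr (ltW cx0)) lnM ?posrE //.
by rewrite addrAC subrr add0r.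
Qed.

Lemma sq_tail_le (F g : R -> R) (s y : R) : 0 < s -> s / 2 <= y -> 0 <= F y ->
  F y <= 2 * (expR (- g y) * y ^-2) -> expR (- g s) * s ^-2 / 2 <= F s ->
  s ^+ 2 * F y ^+ 2 <= 128 * expR (g s - 2 * g y) * F s.
Proof.
move=> s0 sy Fy0 Fy_le Fs_ge; have y0 : 0 < y by lra.
set u := expR (- g y); set w := expR (- g s); set v := s^-1.
have u0 : 0 <= u := expR_ge0 _.
have sv : s * v = 1 by rewrite mulfV ?gt_eqF.
have expR_gap : expR (g s - 2 * g y) * w = u ^+ 2.
  by rewrite /w -expRD -expRM_natl; congr expR; ring.
have Fy_le' : F y <= 8 * u * v ^+ 2.
  have yv : y^-1 <= 2 * v by rewrite -invf_div lef_pV2 ?posrE //; lra.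
  have yv2 : y ^-2 <= 4 * v ^+ 2.
    have yv0 : 0 <= y^-1 by rewrite invr_ge0 ltW.
    rewrite -exprVn (_ : 4 * v ^+ 2 = (2 * v) ^+ 2); last by ring.
    by rewrite ler_sqr ?nnegrE // (le_trans yv0 yv).
  apply: le_trans Fy_le _; rewrite (_ : 8 * u * v ^+ 2 = 2 * (u * (4 * v ^+ 2))).
    by rewrite ler_pM2l // ler_wpM2l.
  by ring.
have lhs : s ^+ 2 * F y ^+ 2 <= 64 * u ^+ 2 * v ^+ 2.
  have -> : 64 * u ^+ 2 * v ^+ 2 = s ^+ 2 * (8 * u * v ^+ 2) ^+ 2.
    transitivity (64 * u ^+ 2 * v ^+ 2 * (s * v) ^+ 2); last by ring.
    by rewrite sv expr1n mulr1.
  apply: ler_wpM2l; first exact: sqr_ge0.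
  by rewrite ler_sqr ?nnegrE // mulr_ge0 ?sqr_ge0 // mulr_ge0.
have Fs_ge' : w * v ^+ 2 <= 2 * F s.
  by rewrite /v exprVn -ler_pdivrMl // mulrC.
apply: le_trans lhs _; rewrite -expR_gap.
rewrite (_ : 128 * _ * F s = 64 * expR (g s - 2 * g y) * (2 * F s)); last by ring.
by rewrite -!mulrA; apply: ler_wpM2l => //; apply: ler_wpM2l; rewrite ?expR_ge0.
Qed.

Lemma natr_sqr_truncn_le (z : R) : 0 <= z -> ((Num.truncn z ^ 2)%:R : R) <= z ^+ 2.
Proof. by move=> z0; rewrite natrX ler_sqr ?nnegrE // truncn_le. Qed.

Lemma zfunE (a delta x : R) : 0 < a -> 0 <= x ->
  zfun a delta x = (1 + delta / Num.sqrt (2 * a)) / a * Num.sqrt (2 * a * x).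
Proof.
move=> a0 x0; have sa0 : 0 < Num.sqrt (2 * a) by rewrite sqrtr_gt0 mulr_gt0.
by rewrite /zfun sqrtrM ?mulr_ge0 ?ltW //; field; rewrite !gt_eqF.
Qed.

End real_asymptotics.

Section yfun_asymptotics.
Variables (R : realType) (a C0 gam : R) (g : R -> R).
Hypotheses (a_gt0 : 0 < a) (C0_gt0 : 0 < C0) (gam_le1 : gam <= 1).
Hypothesis g_powR_nonincr :
  forall u v, 0 < u -> u <= v -> g v / v `^ gam <= g u / u `^ gam.
Hypothesis g_ge_ln : forall K, 0 < K -> \forall t \near +oo, K * ln t <= g t.

Local Notation s x := (Num.sqrt (2 * a * x)).
Local Notation y x := (yfun a C0 g x).

Lemma g_sqrt_sub_ln_cvgy : (g (s x) - 2 * C0 * ln x) @[x --> +oo] --> +oo.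
Proof.
have a2 : 0 < 2 * a by rewrite mulr_gt0.
have K0 : 0 < 4 * C0 + 1 by rewrite addr_gt0 // mulr_gt0.
apply/cvgryPge => A; near=> x.
have x0 : 0 < x by near: x; exact: nbhs_pinfty_gt (num_real _).
have g_ge : (4 * C0 + 1) * ln (s x) <= g (s x).
  by near: x; exact: near_sqrtr_mul a2 (g_ge_ln K0).
have ln_ge : A - 2 * C0 * ln (2 * a) <= 1 * ln (s x).
  by near: x; exact: near_sqrtr_mul a2 (near_le_mulr_ln _ ltr01).
rewrite (ln_sqrtr_mul a2 x0); lra.
Unshelve. all: end_near. Qed.

Lemma yfunE x : y x = s x * (1 - C0 * ln x / g (s x)).
Proof. by rewrite /yfun /hfun; ring. Qed.

Lemma near_yfun_bounds : \forall x \near +oo,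
  s x / 2 <= y x <= s x /\ g (s x) - C0 * ln x <= g (y x).
Proof.
near=> x.
have x1 : 1 <= x by near: x; exact: nbhs_pinfty_ge (num_real _).
have gap : 1 <= g (s x) - 2 * C0 * ln x.
  by near: x; move/cvgryPge : g_sqrt_sub_ln_cvgy; apply.
have lnx0 : 0 <= ln x by exact: ln_ge0.
have gs0 : 0 < g (s x).
  have : 0 <= 2 * C0 * ln x by rewrite !mulr_ge0 // ltW.
  lra.
have s0 : 0 < s x by rewrite sqrtr_gt0 !mulr_gt0 // (lt_le_trans ltr01).
pose r := C0 * ln x / g (s x).
have r0 : 0 <= r by rewrite divr_ge0 // ?(ltW gs0) // mulr_ge0 // ltW.
have r_le : r <= 1 / 2 by rewrite ler_pdivrMr //; lra.
have yE : y x = s x * (1 - r) := yfunE x.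
have ys : y x <= s x by rewrite yE; nra.
have sy : s x / 2 <= y x by rewrite yE; nra.
split; first by apply/andP.
have gr : g (s x) * (y x / s x) = g (s x) - C0 * ln x.
  by rewrite yE [s x * _]mulrC mulfK ?gt_eqF // mulrBr mulr1 /r mulrCA mulfV ?gt_eqF ?mulr1.
rewrite -gr; apply: mul_ratio_le_of_nonincr_powR g_powR_nonincr gam_le1 _ ys (ltW gs0).
lra.
Unshelve. all: end_near. Qed.

Lemma yfun_cvgy : y x @[x --> +oo] --> +oo.
Proof.
have s_cvgy : s x @[x --> +oo] --> +oo by apply: sqrtr_mul_cvgy; rewrite mulr_gt0.
apply/cvgryPge => A; near=> x.
have [/andP[sy _] _] : s x / 2 <= y x <= s x /\ g (s x) - C0 * ln x <= g (y x).
  by near: x; exact: near_yfun_bounds.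
suff : 2 * A <= s x by lra.
by near: x; move/cvgryPge : s_cvgy; apply.
Unshelve. all: end_near. Qed.

Lemma twice_g_yfun_sub_cvgy : (2 * g (y x) - g (s x)) @[x --> +oo] --> +oo.
Proof.
apply/cvgryPge => A; near=> x.
have [_ gy] : s x / 2 <= y x <= s x /\ g (s x) - C0 * ln x <= g (y x).
  by near: x; exact: near_yfun_bounds.
suff : A <= g (s x) - 2 * C0 * ln x by lra.
by near: x; move/cvgryPge : g_sqrt_sub_ln_cvgy; apply.
Unshelve. all: end_near. Qed.

Variable F : R -> R.
Hypothesis F_ge0 : forall t, 0 <= F t.
Hypothesis F_equiv : (F x / (expR (- g x) * x ^-2)) @[x --> +oo] --> (1 : R).

Lemma near_sqr_mul_tail_yfun_le (c eps : R) : 0 < c -> 0 < eps ->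
  \forall x \near +oo, (c * s x) ^+ 2 * F (y x) ^+ 2 <= eps * F (s x).
Proof.
move=> c_gt0 eps_gt0; have a2 : 0 < 2 * a by rewrite mulr_gt0.
pose E t := expR (- g t) * t ^-2.
have tail : \forall t \near +oo, E t / 2 <= F t <= 2 * E t.
  apply: cvg_ratio1_near_bounds F_equiv _; near=> t.
  have t0 : 0 < t by near: t; exact: nbhs_pinfty_gt (num_real _).
  by rewrite mulr_gt0 ?expR_gt0 // invr_gt0 exprn_gt0.
near=> x.
have s0 : 0 < s x.
  by rewrite sqrtr_gt0 mulr_gt0 //; near: x; exact: nbhs_pinfty_gt (num_real _).
have /(_ _)[//|/andP[sy _] _] := near near_yfun_bounds x.
have /andP[_ Fy_le] : E (y x) / 2 <= F (y x) <= 2 * E (y x).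
  by near: x; exact: yfun_cvgy _ tail.
have /andP[Fs_ge _] : E (s x) / 2 <= F (s x) <= 2 * E (s x).
  by near: x; exact: (sqrtr_mul_cvgy a2) _ tail.
have k0 : 0 < 128 * c ^+ 2 by rewrite mulr_gt0 // exprn_gt0.
have exp_le : 128 * c ^+ 2 * expR (g (s x) - 2 * g (y x)) <= eps.
  rewrite mulrC -ler_pdivlMr // -[leRHS]lnK ?posrE ?divr_gt0 // ler_expR.
  suff : - ln (eps / (128 * c ^+ 2)) <= 2 * g (y x) - g (s x) by lra.
  by near: x; move/cvgryPge : twice_g_yfun_sub_cvgy; apply.
have := sq_tail_le s0 sy (F_ge0 _) Fy_le Fs_ge.
move: exp_le; set S := s x; set Y := y x => exp_le tail_le.
rewrite exprMn -mulrA; apply: le_trans (ler_wpM2l (sqr_ge0 c) tail_le) _.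
rewrite !mulrA ler_wpM2r //; apply: le_trans exp_le.
by rewrite -mulrA mulrCA mulrA.
Unshelve. all: end_near. Qed.

End yfun_asymptotics.

Section measurable_comparisons.
Context d (T : measurableType d) (R : realType).
Implicit Types f g : T -> R.

Lemma measurable_ltr_set f g : measurable_fun setT f -> measurable_fun setT g ->
  measurable [set t | f t < g t].
Proof.
move=> mf mg; rewrite -[X in measurable X]setTI.
exact: (measurable_fun_ltr mf mg measurableT (Y := [set true])).
Qed.

Lemma measurable_ler_set f g : measurable_fun setT f -> measurable_fun setT g ->
  measurable [set t | f t <= g t].
Proof.
move=> mf mg; rewrite -[X in measurable X]setTI.
exact: (measurable_fun_ler mf mg measurableT (Y := [set true])).
Qed.

Lemma measurable_bigmaxr (I : Type) (s : seq I) (f0 : T -> R) (h : I -> T -> R) :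
  measurable_fun setT f0 -> (forall i, measurable_fun setT (h i)) ->
  measurable_fun setT (fun t => \big[Num.max/f0 t]_(i <- s) h i t).
Proof.
move=> mf0 mh; elim: s => [|i s IHs].
  by under eq_fun do rewrite big_nil.
under eq_fun do rewrite big_cons; exact: measurable_maxr.
Qed.

End measurable_comparisons.

Section random_walk.
Context d (T : measurableType d) (R : realType) (P : probability T R)
  (X : nat -> {RV P >-> R}).

Lemma measurable_Ssum n : measurable_fun setT (Ssum X n).
Proof. exact: measurable_sum. Qed.

Lemma measurable_Asum n : measurable_fun setT (Asum X n).
Proof. by apply: measurable_sum => k; exact: measurable_Ssum. Qed.

Lemma measurable_Xmax n : measurable_fun setT (Xmax X n).
Proof. exact: measurable_bigmaxr. Qed.

Lemma measurable_is_tau n : measurable [set t | is_tau X t n].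
Proof.
case: n => [|n].
  by rewrite (_ : [set t | _] = set0) //; apply/seteqP; split => t // [].
rewrite (_ : [set t | _] = [set t | Ssum X n.+1 t <= 0] `&`
    \bigcap_(m in [set m | (1 <= m < n.+1)%N]) [set t | 0 < Ssum X m t]).
  apply: measurableI.
    by apply: measurable_ler_set; [exact: measurable_Ssum | exact: measurable_cst].
  apply: bigcap_measurableType => m _.
  by apply: measurable_ltr_set; [exact: measurable_cst | exact: measurable_Ssum].
apply/seteqP; split => t /=.
  by move=> [_ Sn Sm]; split => // m /andP[]; exact: Sm.
by move=> [Sn Sm]; split => // m m1 mn; apply: Sm; rewrite /= m1.
Qed.

Definition two_exceedances (M : nat) (y : R) : set T :=
  [set t | exists k l, [/\ k != l, (k < M)%N, (l < M)%N, y < X k t & y < X l t]].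

Definition exceedance_pair (y : R) (k l : nat) : set T :=
  if k != l then [set t | y < X k t] `&` [set t | y < X l t] else set0.

Lemma two_exceedancesE M y : two_exceedances M y =
  \bigcup_(k < M) \bigcup_(l < M) exceedance_pair y k l.
Proof.
apply/seteqP; split => t /=.
  move=> [k [l [kl kM lM yk yl]]]; exists k => //; exists l => //.
  by rewrite /exceedance_pair kl.
move=> [k /= kM] [l /= lM]; rewrite /exceedance_pair.
by case: ifP => // kl [yk yl]; exists k, l.
Qed.

Lemma measurable_exceedance_pair y k l : measurable (exceedance_pair y k l).
Proof.
rewrite /exceedance_pair; case: ifP => // _.
by apply: measurableI; apply: measurable_ltr_set.
Qed.

Lemma measurable_two_exceedances M y : measurable (two_exceedances M y).
Proof.
rewrite two_exceedancesE; apply: bigcup_measurable => k _.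
by apply: bigcup_measurable => l _; exact: measurable_exceedance_pair.
Qed.

Lemma prob_exceedance_pair_le y k l :
  mutually_independent X -> identically_distributed X ->
  (P (exceedance_pair y k l) <= (Fbar X y ^+ 2)%:E)%E.
Proof.
move=> indep idd; rewrite /exceedance_pair; case: ifPn => [kl|_]; last first.
  by rewrite measure0 lee_fin sqr_ge0.
have m_y : measurable `]y, +oo[%classic by exact: measurable_itv.
have exceedE i : [set t | y < X i t] = X i @^-1` `]y, +oo[.
  by apply/seteqP; split => t /=; rewrite in_itv /= andbT.
have P_exceed i : P [set t | y < X i t] = (Fbar X y)%:E.
  rewrite /Fbar !exceedE idd // fineK // fin_num_measure //.
  exact: measurable_funPTI.
have := indep [:: k; l] (fun=> `]y, +oo[%classic) _ (fun=> m_y).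
rewrite /= inE andbT kl => /(_ isT); rewrite !big_cons big_nil mule1 -!exceedE.
rewrite !P_exceed -EFinM -expr2 => <-.
apply: le_measure; rewrite ?inE.
- by apply: measurableI; apply: measurable_ltr_set.
- by apply: bigcap_measurableType => i _; exact: measurable_funPTI.
- by move=> t [yk yl] i; rewrite -exceedE /mkset !inE => /orP[] /eqP ->.
Qed.

Lemma prob_two_exceedances_le M y :
  mutually_independent X -> identically_distributed X ->
  (P (two_exceedances M y) <= ((M ^ 2)%:R * Fbar X y ^+ 2)%:E)%E.
Proof.
move=> indep idd; rewrite two_exceedancesE bigcup_mkord.
apply: le_trans.
  apply: (@Boole_inequality _ _ _ P (fun k => \bigcup_(l < M) exceedance_pair y k l)).
  by move=> k _; apply: bigcup_measurable => l _; exact: measurable_exceedance_pair.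
have row_le k : (P (\bigcup_(l < M) exceedance_pair y k l) <=
                 (M%:R * Fbar X y ^+ 2)%:E)%E.
  rewrite bigcup_mkord; apply: le_trans.
    apply: (@Boole_inequality _ _ _ P (exceedance_pair y k)).
    by move=> l _; exact: measurable_exceedance_pair.
  apply: (@le_trans _ _ (\sum_(l < M) (Fbar X y ^+ 2)%:E)).
    by apply: lee_sum => l _; exact: prob_exceedance_pair_le.
  by rewrite sumEFin sumr_const card_ord mulr_natl.
apply: (@le_trans _ _ (\sum_(k < M) (M%:R * Fbar X y ^+ 2)%:E)).
  by apply: lee_sum => k _; exact: row_le.
by rewrite sumEFin sumr_const card_ord natrX expr2 -mulrA !mulr_natl.
Qed.

Lemma event_main_sub_two_exceedances a C0 delta g x :
  event_main X a C0 delta g x `<=`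
  two_exceedances (Num.truncn (zfun a delta x)) (yfun a C0 g x).
Proof.
move=> t [n [_ _ _ [k [l [kl kn ln yk yl]]] nz]].
have nM : (n <= Num.truncn (zfun a delta x))%N.
  by rewrite truncn_ge_nat // (le_trans _ nz).
by exists k, l; split => //; exact: leq_trans nM.
Qed.

Lemma measurable_event_main a C0 delta g x :
  measurable (event_main X a C0 delta g x).
Proof.
set y := yfun a C0 g x; set c := Num.sqrt (2 * a * x) - hfun a g x / ln x.
have -> : event_main X a C0 delta g x =
    \bigcup_(n in [set n : nat | n%:R <= zfun a delta x])
      ([set t | is_tau X t n] `&` [set t | x < Asum X n t] `&`
       [set t | y <= Xmax X n t] `&` [set t | Xmax X n t <= c] `&`
       two_exceedances n y).
  apply/seteqP; split => t /=.
    by move=> [n [tau_n Ax [yX Xc] two nz]]; exists n.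
  by move=> [n nz [[[[tau_n Ax] yX] Xc] two]]; exists n.
apply: bigcup_measurable => n _; apply: measurableI; last first.
  exact: measurable_two_exceedances.
apply: measurableI; last by apply: measurable_ler_set => //; exact: measurable_Xmax.
apply: measurableI; last by apply: measurable_ler_set => //; exact: measurable_Xmax.
apply: measurableI; first exact: measurable_is_tau.
by apply: measurable_ltr_set => //; exact: measurable_Asum.
Qed.

Lemma prob_event_main_le a C0 delta g x :
  mutually_independent X -> identically_distributed X ->
  fine (P (event_main X a C0 delta g x)) <=
  (Num.truncn (zfun a delta x) ^ 2)%:R * Fbar X (yfun a C0 g x) ^+ 2.
Proof.
move=> indep idd; rewrite -lee_fin fineK ?fin_num_measure //; last first.
  exact: measurable_event_main.
apply: le_trans (prob_two_exceedances_le _ _ indep idd).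
apply: le_measure; rewrite ?inE; first exact: measurable_event_main.
  exact: measurable_two_exceedances.
exact: event_main_sub_two_exceedances.
Qed.

End random_walk.

Theorem mainTheorem11 (d : measure_display) (T : measurableType d)
  (R : realType) (P : probability T R) (X : nat -> {RV P >-> R})
  (a : R) (g : R -> R) (gamma0 C0 delta : R) :
  mutually_independent X -> identically_distributed X ->
  0 < a ->
  P.-integrable setT (EFin \o X 0%N) ->
  ('E_P[X 0%N] = (- a)%:E)%E ->
  P.-integrable setT (EFin \o (fun t => X 0%N t ^+ 2)) ->
  (Fbar X x / (expR (- g x) * x ^-2)) @[x --> +oo%R] --> (1 : R) ->
  (forall x : R, 0 < x -> derivable g x 1) ->
  (forall x : R, 0 < x -> (derive1 g y) @[y --> x] --> derive1 g x) ->
  (exists x0 : R, forall x y : R, x0 <= x -> x <= y -> g x <= g y) ->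
  0 < gamma0 -> gamma0 < 1 / 2 ->
  (forall x y : R, 0 < x -> x <= y -> g y / y `^ gamma0 <= g x / x `^ gamma0) ->
  (g x / x `^ gamma0) @[x --> +oo%R] --> (0 : R) ->
  (x * derive1 g x) @[x --> +oo%R] --> +oo%R ->
  (5 / 4) / (1 - gamma0) < C0 ->
  0 < delta ->
  forall eps : R, 0 < eps ->
    \forall x \near +oo%R,
      `| fine (P (event_main X a C0 delta g x)) |
        <= eps * `| Fbar X (Num.sqrt (2 * a * x)) |.
Proof.
move=> indep idd a_gt0 _ _ _ Fbar_equiv g_derivable _ _ _ gam_lt12 g_nonincr _
  xg'_cvgy C0_gt d_gt0 eps eps_gt0.
have gam_le1 : gamma0 <= 1 by lra.
have C0_gt0 : 0 < C0 by apply: le_lt_trans C0_gt; rewrite divr_ge0 //; lra.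
have g_ge_ln K : 0 < K -> \forall t \near +oo, K * ln t <= g t.
  by move=> K0; exact: ln_le_near_of_mulr_derive1_cvgy.
have Fbar_ge0 t : 0 <= Fbar X t by exact/fine_ge0/measure_ge0.
pose c := (1 + delta / Num.sqrt (2 * a)) / a.
have c_gt0 : 0 < c by rewrite divr_gt0 // addr_gt0 // divr_gt0 // sqrtr_gt0 mulr_gt0.
have tail_small := near_sqr_mul_tail_yfun_le a_gt0 C0_gt0 gam_le1 g_nonincr g_ge_ln
  Fbar_ge0 Fbar_equiv c_gt0 eps_gt0.
near=> x.
have x0 : 0 < x by near: x; exact: nbhs_pinfty_gt (num_real _).
have zE : zfun a delta x = c * Num.sqrt (2 * a * x) := zfunE _ a_gt0 (ltW x0).
rewrite !ger0_norm ?fine_ge0 ?measure_ge0 //.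
apply: le_trans (prob_event_main_le _ _ _ _ _ indep idd) _.
apply: le_trans (_ : (c * Num.sqrt (2 * a * x)) ^+ 2 * Fbar X (yfun a C0 g x) ^+ 2 <= _).
  apply: ler_wpM2r; first exact: sqr_ge0.
  rewrite -zE; apply: natr_sqr_truncn_le.
  by rewrite zE mulr_ge0 ?sqrtr_ge0 ?ltW.
by near: x; exact: tail_small.
Unshelve. all: end_near. Qed.
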